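(* Fix an integer $d\ge1$ and $n\ge3$. For every $x\neq0$ with $\theta=\theta(x)\in(0,\pi)$, writing $r=\|x\|$ and $\theta_d=g^{\circ d}(\theta)$, $$\Delta L(x)\le\begin{cases}2+(n-2)\dfrac{r-\cos\theta_d}{r}, & \theta\ge\pi/2,\\[2mm] n, & \theta\le\pi/2.\end{cases}$$
   Context: $e_1=(1,0,\dots,0)\in\mathbb{R}^n$; for $x\neq0$, $\theta(x)\in[0,\pi]$ is the angle between $x$ and $e_1$. $g(\theta)=\arccos\big(\frac{(\pi-\theta)\cos\theta+\sin\theta}{\pi}\big)$, $g^{\circ d}$ its $d$-fold composition. $L(x)=\frac12\|x\|^2-\|x\|\cos\big(g^{\circ d}(\theta(x))\big)+\frac12$; $\Delta$ is the Laplacian in $x$. *)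

From HB Require Import structures.
From mathcomp Require Import all_boot all_order all_algebra.
From mathcomp Require Import all_classical all_reals all_analysis.
Set Implicit Arguments. Unset Strict Implicit. Unset Printing Implicit Defensive.
Import Order.TTheory GRing.Theory Num.Theory.
Import numFieldNormedType.Exports.
Local Open Scope ring_scope.

Section Defs.
Variables (R : realType) (n : nat).

Definition dotv (x y : 'rV[R]_n) : R := \sum_(i < n) x ord0 i * y ord0 i.
Definition enorm (x : 'rV[R]_n) : R := Num.sqrt (dotv x x).

Definition e1 : 'rV[R]_n := \row_(i < n) (if nat_of_ord i == 0%N then 1 else 0).

Definition basis_vec (i : 'I_n) : 'rV[R]_n := \row_(j < n) (if j == i then 1 else 0).

Definition theta (x : 'rV[R]_n) : R := acos (dotv x e1 / enorm x).

Definition laplacian (f : 'rV[R]_n -> R) (x : 'rV[R]_n) : R :=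
  \sum_(i < n) derive (fun y => derive f y (basis_vec i)) x (basis_vec i).
End Defs.

Definition gmap {R : realType} (t : R) : R :=
  acos (((pi - t) * cos t + sin t) / pi).

Definition Lpot {R : realType} (n d : nat) (x : 'rV[R]_n) : R :=
  (enorm x) ^+ 2 / 2 - enorm x * cos (iter d gmap (theta x)) + 1 / 2.

From HB Require Import structures.
From mathcomp Require Import all_boot all_order all_algebra.
From mathcomp Require Import all_classical all_reals all_analysis.
From mathcomp Require Import ring lra.
Import Order.TTheory GRing.Theory Num.Theory.
Import numFieldNormedType.Exports.
Set Implicit Arguments.
Unset Strict Implicit.
Local Open Scope ring_scope.

(* Writing r = |x| and s = x_1 / r = cos theta, the map g read through cosines is the smooth
   map gcos s = (s (pi - acos s) + sqrt (1 - s^2)) / pi, so L(x) = r^2/2 - r K(s) + 1/2 with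
   K = gcos^d.  Second derivatives along the coordinate lines give
     Delta L = n - ((n - 1) (K - s K') + (1 - s^2) K'') / r.
   Since gcos' = 1 - acos / pi lies in [0, 1] and gcos'' >= 0, the iterate K inherits
   0 <= K' <= 1 and K'' >= 0, and t cos t <= sin t on [0, pi] gives 0 <= K and s <= K.
   For theta <= pi/2 (s >= 0) this makes K - s K' >= K - s >= 0, hence Delta L <= n; for
   theta >= pi/2 (s <= 0) the excess K - (n - 1) s K' + (1 - s^2) K'' of the first bound
   over Delta L, times r, is a sum of nonnegative terms. *)

Section RealDerivatives.
Variable R : realType.
Implicit Types (f g : R -> R) (x a b : R).

(* Forms of is_deriveD, is_deriveM, ... on explicit lambda-terms, so that the derivative of a
   concrete formula can be assembled with [eapply]. *)
Lemma is_derive1_add f g x a b : is_derive x 1 f a -> is_derive x 1 g b ->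
  is_derive x 1 (fun t => f t + g t) (a + b).
Proof. exact: is_deriveD. Qed.

Lemma is_derive1_sub f g x a b : is_derive x 1 f a -> is_derive x 1 g b ->
  is_derive x 1 (fun t => f t - g t) (a - b).
Proof. exact: is_deriveB. Qed.

Lemma is_derive1_mul f g x a b : is_derive x 1 f a -> is_derive x 1 g b ->
  is_derive x 1 (fun t => f t * g t) (a * g x + f x * b).
Proof.
move=> fa gb; apply: is_derive_eq (is_deriveM fa gb) _.
by rewrite /GRing.scale /= addrC (mulrC (g x)).
Qed.

Lemma is_derive1_inv f x a : f x != 0 -> is_derive x 1 f a ->
  is_derive x 1 (fun t => (f t)^-1) (- a / f x ^+ 2).
Proof.
move=> fx0 fa; apply: is_derive_eq (is_deriveV fx0 fa) _.
by rewrite /GRing.scale /= mulrC mulNr mulrN.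
Qed.

Lemma is_derive1_chain f g x a b : is_derive (g x) 1 f a -> is_derive x 1 g b ->
  is_derive x 1 (fun t => f (g t)) (a * b).
Proof. exact: is_derive1_comp. Qed.

Lemma is_derive1_continuous f x df : is_derive x 1 f df -> {for x, continuous f}.
Proof.
by move=> fdf; apply: differentiable_continuous; apply/derivable1_diffP; case: fdf.
Qed.

Lemma ge0_is_derive1_le f df b : 0 <= b -> (forall x, is_derive x 1 f (df x)) ->
  (forall x, 0 < x < b -> 0 <= df x) -> f 0 <= f b.
Proof.
move=> b0 fdf df0; apply: (ger0_derive1_ndecr (a := 0) (b := b)) => //.
- by move=> x; rewrite in_itv /= derive1E; have [_ ->] := fdf x; exact: df0.
- by apply: continuous_subspaceT => x; exact: is_derive1_continuous (fdf x).
Qed.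

End RealDerivatives.

Section TrigInequalities.
Variable R : realType.

Lemma mulr_cos_le_sin (t : R) : 0 <= t <= pi -> t * cos t <= sin t.
Proof.
case/andP=> t0 tpi.
have := @ge0_is_derive1_le R (fun t => sin t - t * cos t) (fun t => t * sin t) t t0.
rewrite sin0 mul0r subr0 subr_ge0; apply.
  move=> x; eapply is_derive_eq.
    eapply is_derive1_sub; first exact: is_derive_sin.
    eapply is_derive1_mul; [exact: is_derive_id | exact: is_derive_cos].
  by rewrite /=; ring.
move=> x /andP[x0 xt]; rewrite mulr_ge0 ?(ltW x0) // sin_ge0_pi //.
by rewrite ltW //= ltW // (lt_le_trans xt tpi).
Qed.

Lemma sin_le (t : R) : 0 <= t -> sin t <= t.
Proof.
move=> t0.
have := @ge0_is_derive1_le R (fun t => t - sin t) (fun t => 1 - cos t) t t0.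
rewrite sin0 subr0 subr_ge0; apply=> x _.
by rewrite subr_ge0 cos_le1.
Qed.

Lemma cos_le0_pihalf (t : R) : pi / 2 <= t <= pi -> cos t <= 0.
Proof.
move=> /andP[t1 t2]; rewrite -[t](subKr pi) cosB cospi sinpi mul0r addr0 mulN1r oppr_le0.
by apply: cos_ge0_pihalf; apply/andP; split; lra.
Qed.

Lemma acos_in_oo (s : R) : -1 <= s <= 1 -> 0 < acos s < pi -> -1 < s < 1.
Proof.
move=> /andP[sN1 s1] /andP[a0 api]; rewrite !lt_neqAle sN1 s1 !andbT.
apply/andP; split; apply/eqP => sE.
  by move: api; rewrite -sE acosN1 ltxx.
by move: a0; rewrite sE acos1 ltxx.
Qed.

End TrigInequalities.

Section Gcos.
Variable R : realType.
Implicit Types s t : R.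

Definition gcos s : R := (s * (pi - acos s) + Num.sqrt (1 - s ^+ 2)) / pi.
Definition gcos' s : R := 1 - acos s / pi.
Definition gcos'' s : R := (Num.sqrt (1 - s ^+ 2))^-1 / pi.

Lemma pi_neq0 : (pi : R) != 0.
Proof. by rewrite gt_eqF // pi_gt0. Qed.

Lemma subX2_gt0 s : -1 < s < 1 -> 0 < 1 - s ^+ 2.
Proof. by case/andP=> s1 s2; rewrite subr_gt0; nra. Qed.

Lemma is_derive_gcos s : -1 < s < 1 -> is_derive s 1 gcos (gcos' s).
Proof.
move=> s1; have sq0 : 0 < Num.sqrt (1 - s ^+ 2) by rewrite sqrtr_gt0 subX2_gt0.
rewrite /gcos; eapply is_derive_eq.
  eapply is_derive1_mul; last exact: is_derive_cst.
  eapply is_derive1_add.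
    eapply is_derive1_mul; first exact: is_derive_id.
    eapply is_derive1_sub; first exact: is_derive_cst.
    exact: is_derive1_acos.
  eapply is_derive1_chain; first exact/is_derive1_sqrt/subX2_gt0.
  eapply is_derive1_sub; first exact: is_derive_cst.
  eapply is_derive1_mul; exact: is_derive_id.
(* [pi] is generalized because [field] would unfold it. *)
rewrite /gcos' /=; move: sq0 (@pi_neq0); move: (pi : R) => P sq0 P0.
by field; rewrite P0 (gt_eqF sq0).
Qed.

Lemma is_derive_gcos' s : -1 < s < 1 -> is_derive s 1 gcos' (gcos'' s).
Proof.
move=> s1; have sq0 : 0 < Num.sqrt (1 - s ^+ 2) by rewrite sqrtr_gt0 subX2_gt0.
rewrite /gcos'; eapply is_derive_eq.
  eapply is_derive1_sub; first exact: is_derive_cst.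
  eapply is_derive1_mul; last exact: is_derive_cst.
  exact: is_derive1_acos.
rewrite /gcos'' /=; move: sq0 (@pi_neq0); move: (pi : R) => P sq0 P0.
by field; rewrite P0 (gt_eqF sq0).
Qed.

Lemma gcos_acosE s : -1 <= s <= 1 ->
  gcos s = ((pi - acos s) * cos (acos s) + sin (acos s)) / pi.
Proof. by move=> s1; rewrite /gcos acosK ?in_itv // sin_acos // (mulrC s). Qed.

Lemma gcos_ge0 s : -1 <= s <= 1 -> 0 <= gcos s.
Proof.
move=> s1; rewrite gcos_acosE // divr_ge0 ?pi_ge0 //.
have a0 := acos_ge0 s1; have api := acos_lepi s1.
have /andP[t0 tpi] : 0 <= pi - acos s <= pi by apply/andP; split; lra.
have := mulr_cos_le_sin (_ : 0 <= pi - acos s <= pi); rewrite t0 tpi => /(_ isT).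
by rewrite cosB sinB cospi sinpi; lra.
Qed.

Lemma le_gcos s : -1 <= s <= 1 -> s <= gcos s.
Proof.
move=> s1; rewrite gcos_acosE // -{1}(acosK (_ : s \in `[-1, 1])) ?in_itv //.
rewrite ler_pdivlMr ?pi_gt0 //.
have := mulr_cos_le_sin (_ : 0 <= acos s <= pi); rewrite acos_ge0 // acos_lepi //.
by move/(_ isT); lra.
Qed.

Lemma gcos_lt1 s : -1 < s < 1 -> gcos s < 1.
Proof.
move=> s1; have /andP[sN1 s_1] := s1.
have s1' : -1 <= s <= 1 by rewrite !ltW.
rewrite gcos_acosE // ltr_pdivrMr ?pi_gt0 // mul1r.
have t0 : 0 < acos s by rewrite acos_gt0 // ltW.
have tpi : acos s < pi by rewrite acos_ltpi // ltW // andbT.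
have := sin_le (ltW t0); rewrite acosK ?in_itv //.
have : (pi - acos s) * s < pi - acos s by rewrite gtr_pMr ?subr_gt0.
lra.
Qed.

Lemma gcos_le1 s : -1 <= s <= 1 -> gcos s <= 1.
Proof.
move=> s1; rewrite gcos_acosE // ler_pdivrMr ?pi_gt0 // mul1r.
have t0 := acos_ge0 s1; have tpi := acos_lepi s1.
have := sin_le t0; rewrite acosK ?in_itv //.
have : (pi - acos s) * s <= pi - acos s by rewrite ler_piMr ?subr_ge0; case/andP: s1.
lra.
Qed.

Lemma gcos'_ge0 s : -1 <= s <= 1 -> 0 <= gcos' s.
Proof. by move=> s1; rewrite subr_ge0 ler_pdivrMr ?pi_gt0 // mul1r acos_lepi. Qed.

Lemma gcos'_le1 s : -1 <= s <= 1 -> gcos' s <= 1.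
Proof. by move=> s1; rewrite gerBl divr_ge0 ?pi_ge0 ?acos_ge0. Qed.

Lemma gcos''_ge0 s : 0 <= gcos'' s.
Proof. by rewrite divr_ge0 ?pi_ge0 // invr_ge0 sqrtr_ge0. Qed.

Lemma cos_gmap t : 0 <= t <= pi -> 0 <= gmap t <= pi /\ cos (gmap t) = gcos (cos t).
Proof.
move=> t0pi; have c1 : -1 <= cos t <= 1 by rewrite cos_geN1 cos_le1.
have gE : gmap t = acos (gcos (cos t)) by rewrite /gmap gcos_acosE // cosK.
have g1 : -1 <= gcos (cos t) <= 1.
  by rewrite gcos_le1 // andbT (le_trans _ (gcos_ge0 c1)) // lerN10.
by rewrite gE acos_ge0 // acos_lepi // acosK.
Qed.

Lemma cos_iter_gmap d t : 0 <= t <= pi -> cos (iter d gmap t) = iter d gcos (cos t).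
Proof.
move=> t0pi; suff [] : 0 <= iter d gmap t <= pi /\ cos (iter d gmap t) = iter d gcos (cos t) by [].
elim: d => [|d [Tin Tcos]] //=.
by have [gin ->] := cos_gmap Tin; rewrite Tcos.
Qed.

End Gcos.

Arguments gcos {R} s.

Section IteratedGcos.
Variable R : realType.
Implicit Types s : R.

Fixpoint iter_gcos' d s : R :=
  if d is d'.+1 then gcos' (iter d' gcos s) * iter_gcos' d' s else 1.

Fixpoint iter_gcos'' d s : R :=
  if d is d'.+1 then
    gcos'' (iter d' gcos s) * iter_gcos' d' s ^+ 2 + gcos' (iter d' gcos s) * iter_gcos'' d' s
  else 0.

Lemma iter_gcos_in d s : -1 < s < 1 -> -1 < iter d gcos s < 1.
Proof.
move=> s1; elim: d => //= d /[dup] /andP[gN1 g1] g11.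
have g11' : -1 <= iter d gcos s <= 1 by rewrite !ltW.
by rewrite gcos_lt1 // andbT (lt_le_trans _ (gcos_ge0 g11')) // ltrN10.
Qed.

Lemma iter_gcos_ge0 d s : -1 < s < 1 -> 0 <= iter d.+1 gcos s.
Proof.
move=> /(iter_gcos_in d) /andP[gN1 g1].
by rewrite /= gcos_ge0 // !ltW.
Qed.

Lemma le_iter_gcos d s : -1 < s < 1 -> s <= iter d gcos s.
Proof.
move=> s1; elim: d => //= d IHd; apply: le_trans IHd (le_gcos _).
by have /andP[gN1 g1] := iter_gcos_in d s1; rewrite !ltW.
Qed.

Lemma is_derive_iter_gcos d s : -1 < s < 1 ->
  is_derive s 1 (iter d gcos) (iter_gcos' d s).
Proof.
move=> s1; elim: d => [|d IHd]; first exact: is_derive_id.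
apply: (@is_derive1_chain _ gcos (iter d gcos)) IHd.
exact/is_derive_gcos/iter_gcos_in.
Qed.

Lemma is_derive_iter_gcos' d s : -1 < s < 1 ->
  is_derive s 1 (iter_gcos' d) (iter_gcos'' d s).
Proof.
move=> s1; elim: d => [|d IHd]; first exact: is_derive_cst.
have gd := is_derive_iter_gcos d s1.
rewrite /=; eapply is_derive_eq.
  eapply is_derive1_mul; last exact: IHd.
  eapply is_derive1_chain; last exact: gd.
  exact/is_derive_gcos'/iter_gcos_in.
by rewrite /=; ring.
Qed.

Lemma iter_gcos'_ge0 d s : -1 < s < 1 -> 0 <= iter_gcos' d s.
Proof.
move=> s1; elim: d => //= d IHd; rewrite mulr_ge0 // gcos'_ge0 //.
by have /andP[gN1 g1] := iter_gcos_in d s1; rewrite !ltW.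
Qed.

Lemma iter_gcos'_le1 d s : -1 < s < 1 -> iter_gcos' d s <= 1.
Proof.
move=> s1; elim: d => //= d IHd.
have /andP[gN1 g1] := iter_gcos_in d s1.
by rewrite mulr_ile1 ?iter_gcos'_ge0 ?gcos'_ge0 ?gcos'_le1 // !ltW.
Qed.

Lemma iter_gcos''_ge0 d s : -1 < s < 1 -> 0 <= iter_gcos'' d s.
Proof.
move=> s1; elim: d => // d IHd; rewrite [iter_gcos'' _ _]/=.
have /andP[gN1 g1] := iter_gcos_in d s1.
have g11 : -1 <= iter d gcos s <= 1 by rewrite !ltW.
by rewrite addr_ge0 // mulr_ge0 ?gcos''_ge0 ?sqr_ge0 ?gcos'_ge0.
Qed.

End IteratedGcos.

(* L along the line t |-> x + t e_i, with r = |x|, a = x_i, u = x_1, e = [i = 1] and f in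
   the role of gcos^d; primes denote derivatives in t. *)
Section LineRestriction.
Variable R : realType.
Variables (r a u e : R).
Hypothesis r_gt0 : 0 < r.
Implicit Types t : R.

Definition lsqnorm t := r ^+ 2 + 2 * a * t + t ^+ 2.
Definition lnorm t := Num.sqrt (lsqnorm t).
Definition lnorm' t := (a + t) / lnorm t.
Definition lnorm'' t := (lnorm t - (a + t) * lnorm' t) / lnorm t ^+ 2.
Definition lcos t := (u + t * e) / lnorm t.
Definition lcos' t := (e * lnorm t - (u + t * e) * lnorm' t) / lnorm t ^+ 2.
Definition lcos'' t := (- (u + t * e) * lnorm'' t * lnorm t ^+ 2
   - (e * lnorm t - (u + t * e) * lnorm' t) * (2 * lnorm t * lnorm' t)) / lnorm t ^+ 4.

Lemma is_derive_lsqnorm t : is_derive t 1 lsqnorm (2 * a + 2 * t).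
Proof.
rewrite /lsqnorm; eapply is_derive_eq.
  eapply is_derive1_add; last by eapply is_derive1_mul; exact: is_derive_id.
  eapply is_derive1_add; first exact: is_derive_cst.
  eapply is_derive1_mul; [exact: is_derive_cst | exact: is_derive_id].
by rewrite /=; ring.
Qed.

Lemma is_derive_lnorm t : 0 < lsqnorm t -> is_derive t 1 lnorm (lnorm' t).
Proof.
move=> q0; have N0 : 0 < lnorm t by rewrite sqrtr_gt0.
rewrite /lnorm; eapply is_derive_eq.
  eapply is_derive1_chain; [exact: is_derive1_sqrt | exact: is_derive_lsqnorm].
rewrite /lnorm' /lnorm; move: N0; rewrite /lnorm; move: (Num.sqrt _) => N N0.
by field; rewrite gt_eqF.
Qed.

Lemma is_derive_lnorm' t : 0 < lsqnorm t -> is_derive t 1 lnorm' (lnorm'' t).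
Proof.
move=> q0; have N0 : 0 < lnorm t by rewrite sqrtr_gt0.
rewrite /lnorm'; eapply is_derive_eq.
  eapply is_derive1_mul.
    by eapply is_derive1_add; [exact: is_derive_cst | exact: is_derive_id].
  eapply is_derive1_inv; [by rewrite gt_eqF | exact: is_derive_lnorm].
rewrite /lnorm'' /lnorm'; move: N0; move: (lnorm t) => N N0.
by field; rewrite gt_eqF.
Qed.

Lemma is_derive_lcos t : 0 < lsqnorm t -> is_derive t 1 lcos (lcos' t).
Proof.
move=> q0; have N0 : 0 < lnorm t by rewrite sqrtr_gt0.
rewrite /lcos; eapply is_derive_eq.
  eapply is_derive1_mul.
    eapply is_derive1_add; first exact: is_derive_cst.
    eapply is_derive1_mul; [exact: is_derive_id | exact: is_derive_cst].
  eapply is_derive1_inv; [by rewrite gt_eqF | exact: is_derive_lnorm].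
rewrite /lcos'; move: N0; move: (lnorm t) (lnorm' t) => N N' N0.
by field; rewrite gt_eqF.
Qed.

Lemma is_derive_lcos' t : 0 < lsqnorm t -> is_derive t 1 lcos' (lcos'' t).
Proof.
move=> q0; have N0 : 0 < lnorm t by rewrite sqrtr_gt0.
rewrite /lcos'; eapply is_derive_eq.
  eapply is_derive1_mul.
    eapply is_derive1_sub.
      eapply is_derive1_mul; [exact: is_derive_cst | exact: is_derive_lnorm].
    eapply is_derive1_mul; last exact: is_derive_lnorm'.
    eapply is_derive1_add; first exact: is_derive_cst.
    eapply is_derive1_mul; [exact: is_derive_id | exact: is_derive_cst].
  eapply is_derive1_inv; first by rewrite expf_neq0 // gt_eqF.
  eapply is_derive1_mul; exact: is_derive_lnorm.
rewrite /lcos'' /=; move: N0; move: (lnorm t) (lnorm' t) (lnorm'' t) => N N' N'' N0.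
by field; rewrite gt_eqF.
Qed.

Lemma lsqnorm0 : lsqnorm 0 = r ^+ 2.
Proof. by rewrite /lsqnorm; ring. Qed.

Lemma lnorm0 : lnorm 0 = r.
Proof. by rewrite /lnorm lsqnorm0 sqrtr_sqr gtr0_norm. Qed.

Lemma lcos0 : lcos 0 = u / r.
Proof. by rewrite /lcos lnorm0 mul0r addr0. Qed.

Variables f f' f'' : R -> R.
Hypothesis f_f' : forall s : R, -1 < s < 1 -> is_derive s 1 f (f' s).
Hypothesis f'_f'' : forall s : R, -1 < s < 1 -> is_derive s 1 f' (f'' s).
Hypothesis ur_in : -1 < u / r < 1.

Definition lpot t := lsqnorm t / 2 - lnorm t * f (lcos t) + 1 / 2.
Definition lpot' t := a + t - (lnorm' t * f (lcos t) + lnorm t * (f' (lcos t) * lcos' t)).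

Lemma is_derive_lpot t : 0 < lsqnorm t -> -1 < lcos t < 1 ->
  is_derive t 1 lpot (lpot' t).
Proof.
move=> q0 c1; rewrite /lpot; eapply is_derive_eq.
  eapply is_derive1_add; last exact: is_derive_cst.
  eapply is_derive1_sub.
    eapply is_derive1_mul; [exact: is_derive_lsqnorm | exact: is_derive_cst].
  eapply is_derive1_mul; first exact: is_derive_lnorm.
  eapply is_derive1_chain; [exact: f_f' | exact: is_derive_lcos].
by rewrite /lpot' /=; field.
Qed.

Lemma near0_lpot_smooth : \forall t \near 0, 0 < lsqnorm t /\ -1 < lcos t < 1.
Proof.
have q0 : 0 < lsqnorm 0 by rewrite lsqnorm0 exprn_gt0.
have /andP[c0N1 c0_1] := ur_in; rewrite -lcos0 in c0N1 c0_1.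
have qcvg := is_derive1_continuous (is_derive_lsqnorm 0).
have ccvg := is_derive1_continuous (is_derive_lcos q0).
near=> t; split; [|apply/andP; split].
- by near: t; exact: (cvgr_gt _ qcvg _ q0).
- by near: t; exact: (cvgr_gt _ ccvg _ c0N1).
- by near: t; exact: (cvgr_lt _ ccvg _ c0_1).
Unshelve. all: by end_near.
Qed.

Lemma is_derive_lpot'0 : is_derive (0 : R) 1 lpot'
  (1 - (lnorm'' 0 * f (lcos 0) + lnorm' 0 * (f' (lcos 0) * lcos' 0)
        + (lnorm' 0 * (f' (lcos 0) * lcos' 0)
           + lnorm 0 * (f'' (lcos 0) * lcos' 0 * lcos' 0 + f' (lcos 0) * lcos'' 0)))).
Proof.
have q0 : 0 < lsqnorm 0 by rewrite lsqnorm0 exprn_gt0.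
have c1 : -1 < lcos 0 < 1 by rewrite lcos0.
rewrite /lpot'; eapply is_derive_eq.
  eapply is_derive1_sub.
    eapply is_derive1_add; [exact: is_derive_cst | exact: is_derive_id].
  eapply is_derive1_add.
    eapply is_derive1_mul; first exact: is_derive_lnorm'.
    eapply is_derive1_chain; [exact: f_f' | exact: is_derive_lcos].
  eapply is_derive1_mul; first exact: is_derive_lnorm.
  eapply is_derive1_mul; last exact: is_derive_lcos'.
  eapply is_derive1_chain; [exact: f'_f'' | exact: is_derive_lcos].
by rewrite /=; ring.
Qed.

Lemma derive2_lpot0 (s := u / r) (c := a / r) : derive1 (derive1 lpot) 0 =
  1 - ((1 - c ^+ 2) * (f s - s * f' s) + (e - s * c) ^+ 2 * f'' s) / r.
Proof.
have -> : derive1 (derive1 lpot) 0 = derive1 lpot' 0.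
  rewrite !derive1E; apply: near_eq_derive; near=> t.
  have [q0 c1] : 0 < lsqnorm t /\ -1 < lcos t < 1 by near: t; exact: near0_lpot_smooth.
  by rewrite derive1E; case: (is_derive_lpot q0 c1).
rewrite derive1E; case: is_derive_lpot'0 => _ ->.
rewrite /lcos'' /lcos' /lnorm'' /lnorm' lcos0 lnorm0 !mul0r !addr0 /s /c.
by field; rewrite gt_eqF.
Unshelve. all: by end_near.
Qed.

End LineRestriction.

Section Euclidean.
Variables (R : realType) (n : nat).
Implicit Types (x y : 'rV[R]_n.+1) (i : 'I_n.+1) (t : R).

Lemma sum_mul_delta (F : 'I_n.+1 -> R) i : \sum_(j < n.+1) F j * (j == i)%:R = F i.
Proof.
rewrite (bigD1 i) //= eqxx mulr1 big1 ?addr0 // => j /negbTE ->.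
by rewrite mulr0.
Qed.

Lemma dotv_ge0 y : 0 <= dotv y y.
Proof. by rewrite /dotv sumr_ge0 // => i _; rewrite -expr2 sqr_ge0. Qed.

Lemma sqr_enorm y : enorm y ^+ 2 = dotv y y.
Proof. by rewrite /enorm sqr_sqrtr // dotv_ge0. Qed.

Lemma enorm_gt0 y : y != 0 -> 0 < enorm y.
Proof.
move=> y0; rewrite /enorm sqrtr_gt0 lt_def dotv_ge0 andbT.
apply: contra y0 => /eqP /psumr_eq0P y2_0; apply/eqP/rowP => j.
have /eqP := y2_0 (fun i _ => ltac:(by rewrite -expr2 sqr_ge0)) j isT.
by rewrite mulf_eq0 orbb mxE => /eqP.
Qed.

Lemma dotv_e1 y : dotv y (e1 R n.+1) = y ord0 ord0.
Proof.
rewrite /dotv -[RHS](sum_mul_delta (y ord0)); apply: eq_bigr => j _.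
by rewrite mxE; case: j => -[|j] jn.
Qed.

Lemma coord_le_enorm y i : `|y ord0 i| <= enorm y.
Proof.
rewrite /enorm -sqrtr_sqr ler_sqrt ?dotv_ge0 // /dotv (bigD1 i) //= -expr2.
by rewrite lerDl sumr_ge0 // => j _; rewrite -expr2 sqr_ge0.
Qed.

Lemma coord0_div_enorm_in y : -1 <= y ord0 ord0 / enorm y <= 1.
Proof.
rewrite -ler_norml normrM normfV.
have [->|y0] := eqVneq (enorm y) 0; first by rewrite normr0 invr0 mulr0.
have y_gt0 : 0 < enorm y by rewrite lt_def y0 sqrtr_ge0.
by rewrite (gtr0_norm y_gt0) ler_pdivrMr // mul1r coord_le_enorm.
Qed.

Lemma dotv_line x i t :
  dotv (x + t *: basis_vec R i) (x + t *: basis_vec R i) = dotv x x + 2 * x ord0 i * t + t ^+ 2.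
Proof.
rewrite /dotv -addrA -(sum_mul_delta (fun j => 2 * x ord0 j * t + t ^+ 2) i) -big_split /=.
by apply: eq_bigr => j _; rewrite !mxE; case: (j == i); rewrite ?mulr1n ?mulr0n; ring.
Qed.

Lemma coord0_line x i t :
  (x + t *: basis_vec R i) ord0 ord0 = x ord0 ord0 + t * (i == ord0)%:R.
Proof. by rewrite !mxE eq_sym; case: (i == ord0). Qed.

(* Also at y = 0, where both sides are 1/2. *)
Lemma Lpot_gcosE d y :
  Lpot d y = enorm y ^+ 2 / 2 - enorm y * iter d gcos (y ord0 ord0 / enorm y) + 1 / 2.
Proof.
have s1 := coord0_div_enorm_in y.
rewrite /Lpot /theta dotv_e1.
have [->|y0] := eqVneq (enorm y) 0; first by rewrite !mul0r.
rewrite cos_iter_gmap ?acosK ?in_itv //.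
by rewrite acos_ge0 // acos_lepi.
Qed.

Lemma derive_line (f : 'rV[R]_n.+1 -> R) x v :
  derive f x v = derive1 (fun t => f (x + t *: v)) 0.
Proof.
rewrite /derive /derive1; set D := (fun _ : R => _); set D' := (fun _ : R => _).
suff -> : D = D' by [].
by apply: funext => h; rewrite /D /D' scale0r !addr0 (addrC x).
Qed.

Lemma derive2_line (f : 'rV[R]_n.+1 -> R) x v :
  derive (fun y => derive f y v) x v = derive1 (derive1 (fun t => f (x + t *: v))) 0.
Proof.
rewrite derive_line; congr (derive1 _ 0); apply: funext => t.
rewrite derive_line /derive1; set D := (fun _ : R => _); set D' := (fun _ : R => _).
suff -> : D = D' by [].
by apply: funext => h; rewrite /D /D' scale0r !addr0 (addrC h) scalerDl addrA.
Qed.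

Lemma sum_laplacian_terms (c : 'I_n.+1 -> R) (r A B : R) :
  \sum_(i < n.+1) c i ^+ 2 = 1 ->
  \sum_(i < n.+1) (1 - ((1 - c i ^+ 2) * A + ((i == ord0)%:R - c ord0 * c i) ^+ 2 * B) / r)
  = n.+1%:R - (n%:R * A + (1 - c ord0 ^+ 2) * B) / r.
Proof.
move=> c2; pose s := c ord0.
under eq_bigr => i _ do have -> :
    1 - ((1 - c i ^+ 2) * A + ((i == ord0)%:R - s * c i) ^+ 2 * B) / r
    = (1 - A / r) + c i ^+ 2 * ((A - s ^+ 2 * B) / r) - (B * (1 - 2 * s * c i)) / r * (i == ord0)%:R
  by case: (i == ord0); rewrite /= ?mulr1 ?mulr0; ring.
rewrite sumrB big_split /= sum_mul_delta -mulr_suml c2 sumr_const card_ord.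
by rewrite -/s -mulr_natl -natr1; ring.
Qed.

Lemma laplacian_Lpot d x (r := enorm x) (s := x ord0 ord0 / r) :
  x != 0 -> -1 < s < 1 ->
  laplacian (Lpot d) x = n.+1%:R
    - (n%:R * (iter d gcos s - s * iter_gcos' d s) + (1 - s ^+ 2) * iter_gcos'' d s) / r.
Proof.
move=> x0 s1; have r0 : 0 < r := enorm_gt0 x0.
pose c i := x ord0 i / r.
have c2 : \sum_(i < n.+1) c i ^+ 2 = 1.
  transitivity (dotv x x / r ^+ 2); last by rewrite -sqr_enorm divff // gt_eqF ?exprn_gt0.
  by rewrite /dotv mulr_suml; apply: eq_bigr => i _; rewrite expr_div_n expr2.
rewrite -(sum_laplacian_terms r (iter d gcos s - s * iter_gcos' d s) (iter_gcos'' d s) c2).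
apply: eq_bigr => i _; rewrite derive2_line.
have -> : (fun t => Lpot d (x + t *: basis_vec R i))
    = lpot r (x ord0 i) (x ord0 ord0) (i == ord0)%:R (iter d gcos).
  apply: funext => t.
  have nE : enorm (x + t *: basis_vec R i) = lnorm r (x ord0 i) t.
    by rewrite /lnorm /lsqnorm /enorm dotv_line -sqr_enorm.
  by rewrite Lpot_gcosE sqr_enorm dotv_line -sqr_enorm coord0_line nE.
by rewrite (derive2_lpot0 _ _ r0 (is_derive_iter_gcos d) (is_derive_iter_gcos' d) s1).
Qed.

End Euclidean.

Section LaplacianBounds.
Variable R : realType.
Variables (n : nat) (r s K K' K'' : R).
Hypotheses (r_gt0 : 0 < r) (s_in : -1 < s < 1) (K'_ge0 : 0 <= K') (K''_ge0 : 0 <= K'').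

Lemma laplacian_bound_le0 : (0 < n)%N -> s <= 0 -> 0 <= K ->
  n.+1%:R - (n%:R * (K - s * K') + (1 - s ^+ 2) * K'') / r
    <= 2 + (n.+1 - 2)%:R * ((r - K) / r).
Proof.
move=> n0 s0 K0; rewrite -subr_ge0 subSS natrB // -[n.+1%:R]natr1.
have -> : 2 + (n%:R - 1) * ((r - K) / r)
      - (n%:R + 1 - (n%:R * (K - s * K') + (1 - s ^+ 2) * K'') / r)
    = (K + n%:R * (- s) * K' + (1 - s ^+ 2) * K'') / r by field; rewrite gt_eqF.
by rewrite divr_ge0 ?(ltW r_gt0) // !addr_ge0 ?mulr_ge0 ?oppr_ge0 ?(ltW (subX2_gt0 s_in)).
Qed.

Lemma laplacian_bound_ge0 : 0 <= s -> s <= K -> K' <= 1 ->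
  n.+1%:R - (n%:R * (K - s * K') + (1 - s ^+ 2) * K'') / r <= n.+1%:R.
Proof.
move=> s0 sK K'1; rewrite gerBl divr_ge0 ?(ltW r_gt0) //.
rewrite addr_ge0 ?mulr_ge0 ?(ltW (subX2_gt0 s_in)) // subr_ge0.
by apply: le_trans sK; rewrite ler_piMr.
Qed.

End LaplacianBounds.

Unset Implicit Arguments.

Theorem mainTheorem7 (R : realType) (d n : nat) (hd : (1 <= d)%N) (hn : (3 <= n)%N)
  (x : 'rV[R]_n) (hx : x != 0)
  (hth : 0 < theta x < pi) :
  (pi / 2 <= theta x ->
     laplacian (Lpot d) x
       <= 2 + (n - 2)%:R * ((enorm x - cos (iter d gmap (theta x))) / enorm x)) /\
  (theta x <= pi / 2 -> laplacian (Lpot d) x <= n%:R).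
Proof.
case: n hn x hx hth => [//|n] hn x hx hth.
have r0 := enorm_gt0 hx; set r := enorm x in r0 *.
have s1 := coord0_div_enorm_in x; set s := x ord0 ord0 / r in s1.
have thetaE : theta x = acos s by rewrite /theta dotv_e1.
have s_in : -1 < s < 1 by apply: (acos_in_oo s1); rewrite -thetaE.
have cos_theta : cos (theta x) = s by rewrite thetaE acosK ?in_itv.
have /andP[th0 thpi] := hth.
rewrite cos_iter_gmap ?(ltW th0) ?(ltW thpi) // cos_theta laplacian_Lpot //.
rewrite -/r -/s; split => th_pihalf.
- apply: laplacian_bound_le0; rewrite ?iter_gcos'_ge0 ?iter_gcos''_ge0 //.
  + by move: hn; rewrite ltnS; exact: leq_trans.
  + by rewrite -cos_theta cos_le0_pihalf // th_pihalf ltW.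
  + by case: d hd => // d _; exact: iter_gcos_ge0.
- apply: laplacian_bound_ge0;
    rewrite ?iter_gcos'_ge0 ?iter_gcos''_ge0 ?iter_gcos'_le1 ?le_iter_gcos //.
  by rewrite -cos_theta cos_ge0_pihalf // th_pihalf andbT; have := pi_gt0 R; lra.
Qed.
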